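(* The largest supercommutative quotient of $OSym$ is $R:=OSym/\langle o^2,[o,e_2]\rangle$ (with $o:=e_1$, $[a,b]=ab-ba$). Writing $\dot a$ for the image of $a\in OSym$ in $R$, one has $\dot e_{2r+1}=\dot e_{2r}\dot o$ and $\dot h_{2r+1}=\dot h_{2r}\dot o$ for all $r\ge0$, and there is an isomorphism of graded superalgebras $R\xrightarrow{\sim}Sym[c]$ sending $\dot o\mapsto c$, $(-1)^r\dot e_{2r}$ to the $r$-th elementary symmetric function, and $\dot h_{2r}$ to the $r$-th complete symmetric function.
   Context: $\Bbbk$ is an algebraically closed field of characteristic $\neq2$. $OSym$ is the graded superalgebra generated by $h_r$ ($r\ge1$) of degree $2r$ and parity $r\bmod2$ subject to (with $h_0:=1$, $r\ge0,s\ge1$): $h_rh_s=h_sh_r$ if $r\equiv s\pmod2$; $h_rh_s+(-1)^rh_sh_r=(-1)^rh_{r+1}h_{s-1}+h_{s-1}h_{r+1}$ if $r\not\equiv s\pmod2$. Define $e_r$ by $\sum_{s=0}^r(-1)^se_sh_{r-s}=\delta_{r,0}$. A graded superalgebra is supercommutative if $ab=(-1)^{\mathrm{par}(a)\mathrm{par}(b)}ba$ for homogeneous $a,b$. $Sym$ is the (ordinary) algebra of symmetric functions over $\Bbbk$, viewed as purely even with the $r$-th elementary and complete symmetric functions in degree $4r$; $Sym[c]$ is the supercommutative graded superalgebra obtained by adjoining an odd element $c$ of degree $2$ with $c^2=0$. *)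

From HB Require Import structures.
From mathcomp Require Import all_boot all_order all_algebra.
Set Implicit Arguments. Unset Strict Implicit. Unset Printing Implicit Defensive.
Import Order.TTheory GRing.Theory Num.Theory.
Local Open Scope ring_scope.

Section Defs.
Variable K : fieldType.

(* The defining relations of OSym, for a family g (g r = image of h_r). *)
Definition OSym_rel (B : algType K) (g : nat -> B) : Prop :=
  g 0%N = 1 /\
  forall r s : nat, (0 < s)%N ->
    if odd r == odd s then g r * g s = g s * g r
    else g r * g s + (-1) ^+ r * (g s * g r)
         = (-1) ^+ r * (g r.+1 * g s.-1) + g s.-1 * g r.+1.

Definition is_OSym (A : algType K) (h : nat -> A) : Prop :=
  OSym_rel h /\
  forall (B : algType K) (g : nat -> B), OSym_rel g ->
    exists f : {lrmorphism A -> B}, (forall r, f (h r) = g r) /\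
      forall f' : {lrmorphism A -> B}, (forall r, f' (h r) = g r) -> f' =1 f.

Definition OSym_deg (A : algType K) (h : nat -> A) (d : nat) (a : A) : Prop :=
  exists s : seq (K * seq nat),
    (forall x, x \in s -> (2 * sumn x.2)%N = d) /\
    a = \sum_(x <- s) x.1 *: \prod_(r <- x.2) h r.

Definition OSym_par (A : algType K) (h : nat -> A) (p : bool) (a : A) : Prop :=
  exists s : seq (K * seq nat),
    (forall x, x \in s -> odd (sumn x.2) = p) /\
    a = \sum_(x <- s) x.1 *: \prod_(r <- x.2) h r.

Definition scomm (A : algType K) (h : nat -> A) (x : A) : Prop :=
  exists (a b : A) (pa pb : bool), OSym_par h pa a /\ OSym_par h pb b /\
    x = a * b - (-1) ^+ (pa && pb) * (b * a).

Definition ideal_gen (A : algType K) (P : A -> Prop) (x : A) : Prop :=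
  exists s : seq (A * A * A),
    (forall t, t \in s -> P t.1.2) /\
    x = \sum_(t <- s) t.1.1 * t.1.2 * t.2.

(* (S, e) is the algebra of symmetric functions, e r being the r-th
   elementary symmetric function (e 0 = 1): the free commutative algebra
   on the e r, r >= 1. *)
Definition is_Sym (S : comAlgType K) (e : nat -> S) : Prop :=
  e 0%N = 1 /\
  forall (B : comAlgType K) (b : nat -> B), b 0%N = 1 ->
    exists f : {lrmorphism S -> B}, (forall r, f (e r) = b r) /\
      forall f' : {lrmorphism S -> B}, (forall r, f' (e r) = b r) -> f' =1 f.

Definition Sym_deg (S : comAlgType K) (e : nat -> S) (d : nat) (x : S) : Prop :=
  exists s : seq (K * seq nat),
    (forall y, y \in s -> (4 * sumn y.2)%N = d) /\
    x = \sum_(y <- s) y.1 *: \prod_(r <- y.2) e r.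

(* (T, iota, c) is Sym[c]: Sym with an (odd) element c adjoined, c^2 = 0.
   As Sym is purely even, Sym[c] is commutative; universal property. *)
Definition is_adjoin_c (S T : comAlgType K) (iota : {lrmorphism S -> T}) (c : T)
  : Prop :=
  c * c = 0 /\
  forall (B : comAlgType K) (f : {lrmorphism S -> B}) (d : B), d * d = 0 ->
    exists g : {lrmorphism T -> B},
      ((forall x, g (iota x) = f x) /\ g c = d) /\
      forall g' : {lrmorphism T -> B},
        (forall x, g' (iota x) = f x) -> g' c = d -> g' =1 g.

Definition SymC_deg (S T : comAlgType K) (e : nat -> S) (iota : {lrmorphism S -> T})
  (c : T) (d : nat) (t : T) : Prop :=
  exists s0 s1 : S, Sym_deg e d s0 /\ ((2 <= d)%N -> Sym_deg e (d - 2) s1) /\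
    ((d < 2)%N -> s1 = 0) /\ t = iota s0 + iota s1 * c.

Definition SymC_par (S T : comAlgType K) (iota : {lrmorphism S -> T}) (c : T)
  (p : bool) (t : T) : Prop :=
  exists s : S, t = if p then iota s * c else iota s.

End Defs.

From HB Require Import structures.
From mathcomp Require Import all_boot all_order all_algebra.
From mathcomp Require Import boolp zify ring.
Import GRing.Theory.
Local Open Scope ring_scope.

Set Implicit Arguments. Unset Strict Implicit. Unset Printing Implicit Defensive.

(* Modulo J = <o^2, [o, e_2]>, with o = e_1 = h_1, the OSym relation for
   (r, s) = (2k, 1) reads 2 h_(2k+1) = h_(2k) o + o h_(2k), and the one for
   (1, 2k+4) propagates the commutation of o with h_(2k+2) to h_(2k+4).  Hence
   o commutes with every h_(2k), h_(2k+1) = h_(2k) o, and OSym/J is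
   commutative.  Odd elements are then multiples of o, so all supercommutators
   lie in J; conversely o^2 (half of [o, o]) and [o, e_2] are
   supercommutators.  Sending h_(2k) to h_k and h_(2k+1) to h_k c respects the
   OSym relations in Sym[c], which gives phi : OSym -> Sym[c] killing J; the
   universal properties of Sym and Sym[c] give a map back to OSym/J with
   e_k |-> (-1)^k e_(2k) and c |-> o, and uniqueness of morphisms out of OSym
   and Sym[c] makes the two mutually inverse. *)

Section IdealGen.
Variables (K : fieldType) (A : algType K) (P : A -> Prop).
Local Notation I := (ideal_gen P).

Lemma ideal_gen0 : I 0.
Proof. by exists [::]; rewrite big_nil. Qed.

Lemma ideal_genD x y : I x -> I y -> I (x + y).
Proof.
move=> [s1 [P1 ->]] [s2 [P2 ->]]; exists (s1 ++ s2); rewrite big_cat; split=> // t.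
by rewrite mem_cat => /orP[/P1|/P2].
Qed.

Lemma ideal_genMl a x : I x -> I (a * x).
Proof.
move=> [s [Ps ->]]; exists [seq (a * t.1.1, t.1.2, t.2) | t <- s]; split.
  by move=> t /mapP[u /Ps Pu ->].
by rewrite big_map mulr_sumr; apply: eq_bigr => t _; rewrite !mulrA.
Qed.

Lemma ideal_genMr x b : I x -> I (x * b).
Proof.
move=> [s [Ps ->]]; exists [seq (t.1.1, t.1.2, t.2 * b) | t <- s]; split.
  by move=> t /mapP[u /Ps Pu ->].
by rewrite big_map mulr_suml; apply: eq_bigr => t _; rewrite !mulrA.
Qed.

Lemma ideal_genZ k x : I x -> I (k *: x).
Proof. by rewrite -mulr_algl; apply: ideal_genMl. Qed.

Lemma ideal_genN x : I x -> I (- x).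
Proof. by rewrite -scaleN1r; apply: ideal_genZ. Qed.

Lemma mem_ideal_gen x : P x -> I x.
Proof.
move=> Px; exists [:: (1, x, 1)]; rewrite big_seq1 mulr1 mul1r.
by split=> // t; rewrite inE => /eqP ->.
Qed.

End IdealGen.

Lemma ideal_gen_min (K : fieldType) (A : algType K) (P Q : A -> Prop) x :
  (forall y, P y -> ideal_gen Q y) -> ideal_gen P x -> ideal_gen Q x.
Proof.
move=> PQ [s [Ps ->]]; rewrite big_seq.
apply: (big_ind (ideal_gen Q)) => [|y z|t /Ps /PQ Qt].
- exact: ideal_gen0.
- exact: ideal_genD.
- exact/ideal_genMr/ideal_genMl.
Qed.

Lemma rmorph_ideal_gen_eq0 (K : fieldType) (A : algType K) (P : A -> Prop)
  (B : pzRingType) (f : {rmorphism A -> B}) x :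
  (forall y, P y -> f y = 0) -> ideal_gen P x -> f x = 0.
Proof.
move=> fP [s [Ps ->]]; rewrite rmorph_sum big1_seq // => t /Ps /fP ft.
by rewrite !rmorphM /= ft mulr0 mul0r.
Qed.

Section Quotient.
Local Open Scope quotient_scope.
Variables (K : fieldType) (A : algType K) (P : A -> Prop).
Hypothesis P_proper : ~ ideal_gen P 1.
Local Notation I := (ideal_gen P).

Definition eqmod_ideal (x y : A) : bool := `[< I (x - y) >].

Lemma eqmod_ideal_equiv : equiv_class_of eqmod_ideal.
Proof.
split=> [x|x y|y x z]; rewrite /eqmod_ideal.
- by apply/asboolP; rewrite subrr; apply: ideal_gen0.
- by apply/asboolP/asboolP => /ideal_genN; rewrite opprB.
- move=> /asboolP Ixy /asboolP Iyz; apply/asboolP.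
  by have := ideal_genD Ixy Iyz; rewrite addrA subrK.
Qed.

Canonical eqmod_ideal_equivRel := EquivRelPack eqmod_ideal_equiv.
Canonical eqmod_ideal_encModRel := defaultEncModRel eqmod_ideal.

(* Indexed by the properness proof so that the nontrivial ring structure,
   which needs [1 != 0], can be declared on this type. *)
Definition quot_alg of ~ ideal_gen P 1 := {eq_quot eqmod_ideal}.
Local Notation Q := (quot_alg P_proper).
HB.instance Definition _ : EqQuotient A eqmod_ideal Q := EqQuotient.on Q.
HB.instance Definition _ := Choice.on Q.

Lemma eqmod_idealP x y : (x = y %[mod Q]) <-> I (x - y).
Proof. by split=> [/eqquotP/asboolP | Ixy]; last apply/eqquotP/asboolP. Qed.

Lemma repr_eqmod x : I (repr (\pi_Q x) - x).
Proof. by apply/eqmod_idealP; rewrite reprK. Qed.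

Definition quot_zero : Q := lift_cst Q 0.
Definition quot_one : Q := lift_cst Q 1.
Definition quot_opp := lift_op1 Q -%R.
Definition quot_add := lift_op2 Q +%R.
Definition quot_mul := lift_op2 Q *%R.
Definition quot_scale (k : K) := lift_op1 Q ( *:%R k).

Canonical pi_quot_zero := PiConst quot_zero.
Canonical pi_quot_one := PiConst quot_one.

Lemma pi_quot_opp : {morph \pi_Q : x / - x >-> quot_opp x}.
Proof.
by move=> x; unlock quot_opp; apply/eqmod_idealP; rewrite opprK addrC; apply: repr_eqmod.
Qed.
Canonical pi_quot_opp_morph := PiMorph1 pi_quot_opp.

Lemma pi_quot_add : {morph \pi_Q : x y / x + y >-> quot_add x y}.
Proof.
move=> x y; unlock quot_add; apply/eqmod_idealP.
have := ideal_genN (ideal_genD (repr_eqmod x) (repr_eqmod y)).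
by rewrite opprD !opprB addrACA opprD.
Qed.
Canonical pi_quot_add_morph := PiMorph2 pi_quot_add.

Lemma pi_quot_mul : {morph \pi_Q : x y / x * y >-> quot_mul x y}.
Proof.
move=> x y; unlock quot_mul; apply/eqmod_idealP.
set x' := repr _; set y' := repr _.
have -> : x * y - x' * y' = - ((x' - x) * y' + x * (y' - y)).
  by rewrite mulrBl mulrBr addrA subrK opprB.
apply/ideal_genN/ideal_genD; first exact/ideal_genMr/repr_eqmod.
exact/ideal_genMl/repr_eqmod.
Qed.
Canonical pi_quot_mul_morph := PiMorph2 pi_quot_mul.

Lemma pi_quot_scale k : {morph \pi_Q : x / k *: x >-> quot_scale k x}.
Proof.
move=> x; unlock quot_scale; apply/eqmod_idealP.
by rewrite -scalerBr -opprB scalerN; apply/ideal_genN/ideal_genZ/repr_eqmod.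
Qed.
Canonical pi_quot_scale_morph k := PiMorph1 (pi_quot_scale k).

Lemma quot_addA : associative quot_add.
Proof. by elim/quotW=> x; elim/quotW=> y; elim/quotW=> z; rewrite !piE addrA. Qed.
Lemma quot_addC : commutative quot_add.
Proof. by elim/quotW=> x; elim/quotW=> y; rewrite !piE addrC. Qed.
Lemma quot_add0 : left_id quot_zero quot_add.
Proof. by elim/quotW=> x; rewrite !piE add0r. Qed.
Lemma quot_addN : left_inverse quot_zero quot_opp quot_add.
Proof. by elim/quotW=> x; rewrite !piE addNr. Qed.

HB.instance Definition _ :=
  GRing.isZmodule.Build Q quot_addA quot_addC quot_add0 quot_addN.

Lemma quot_mulA : associative quot_mul.
Proof. by elim/quotW=> x; elim/quotW=> y; elim/quotW=> z; rewrite !piE mulrA. Qed.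
Lemma quot_mul1 : left_id quot_one quot_mul.
Proof. by elim/quotW=> x; rewrite !piE mul1r. Qed.
Lemma quot_mulr1 : right_id quot_one quot_mul.
Proof. by elim/quotW=> x; rewrite !piE mulr1. Qed.
Lemma quot_mulDl : left_distributive quot_mul +%R.
Proof. by elim/quotW=> x; elim/quotW=> y; elim/quotW=> z; rewrite !piE mulrDl. Qed.
Lemma quot_mulDr : right_distributive quot_mul +%R.
Proof. by elim/quotW=> x; elim/quotW=> y; elim/quotW=> z; rewrite !piE mulrDr. Qed.
Lemma quot_one_neq0 : quot_one != 0.
Proof.
have -> : quot_one = \pi_Q 1 by rewrite piE.
have -> : (0 : Q) = \pi_Q 0 by rewrite piE.
by apply/eqP => /eqmod_idealP; rewrite subr0.
Qed.

HB.instance Definition _ := GRing.Zmodule_isNzRing.Build Q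
  quot_mulA quot_mul1 quot_mulr1 quot_mulDl quot_mulDr quot_one_neq0.

Lemma quot_scaleA a b v : quot_scale a (quot_scale b v) = quot_scale (a * b) v.
Proof. by elim/quotW: v => v; rewrite !piE scalerA. Qed.
Lemma quot_scale1 : left_id 1 quot_scale.
Proof. by elim/quotW=> v; rewrite !piE scale1r. Qed.
Lemma quot_scaleDr : right_distributive quot_scale +%R.
Proof. by move=> a; elim/quotW=> x; elim/quotW=> y; rewrite !piE scalerDr. Qed.
Lemma quot_scaleDl v : {morph quot_scale^~ v : a b / a + b}.
Proof. by elim/quotW: v => v a b; rewrite !piE scalerDl. Qed.

HB.instance Definition _ := GRing.Zmodule_isLmodule.Build K Q
  quot_scaleA quot_scale1 quot_scaleDr quot_scaleDl.

Lemma quot_scaleAl (a : K) (u v : Q) : a *: (u * v) = (a *: u) * v.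
Proof.
by elim/quotW: u => u; elim/quotW: v => v; rewrite /GRing.scale /GRing.mul /= !piE scalerAl.
Qed.
HB.instance Definition _ := GRing.Lmodule_isLalgebra.Build K Q quot_scaleAl.
Lemma quot_scaleAr (a : K) (u v : Q) : a *: (u * v) = u * (a *: v).
Proof.
by elim/quotW: u => u; elim/quotW: v => v; rewrite /GRing.scale /GRing.mul /= !piE scalerAr.
Qed.
HB.instance Definition _ := GRing.Lalgebra_isAlgebra.Build K Q quot_scaleAr.

Definition quot_pi (x : A) : Q := \pi_Q x.

Lemma quot_pi_is_zmod_morphism : zmod_morphism quot_pi.
Proof. by move=> x y; rewrite /quot_pi !piE. Qed.
Lemma quot_pi_is_monoid_morphism : monoid_morphism quot_pi.
Proof. by split=> [|x y]; rewrite /quot_pi !piE. Qed.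
Lemma quot_pi_is_scalable : scalable quot_pi.
Proof. exact: pi_quot_scale. Qed.
HB.instance Definition _ :=
  GRing.isZmodMorphism.Build A Q quot_pi quot_pi_is_zmod_morphism.
HB.instance Definition _ :=
  GRing.isMonoidMorphism.Build A Q quot_pi quot_pi_is_monoid_morphism.
HB.instance Definition _ :=
  GRing.isScalable.Build K A Q *:%R quot_pi quot_pi_is_scalable.

Lemma quot_pi_eq0 x : quot_pi x = 0 <-> I x.
Proof.
rewrite -(raddf0 quot_pi); split=> [/eqmod_idealP | Ix]; first by rewrite subr0.
by apply/eqmod_idealP; rewrite subr0.
Qed.

Lemma quot_piK (q : Q) : quot_pi (repr q) = q.
Proof. exact: reprK. Qed.

Section Lift.
Variables (B : algType K) (f : {lrmorphism A -> B}).
Hypothesis f_P : forall y, P y -> f y = 0.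

Definition quot_lift (q : Q) : B := f (repr q).

Lemma quot_liftE x : quot_lift (quot_pi x) = f x.
Proof.
apply/eqP; rewrite -subr_eq0 -raddfB; apply/eqP.
exact/(rmorph_ideal_gen_eq0 f_P)/repr_eqmod.
Qed.

Lemma quot_lift_is_zmod_morphism : zmod_morphism quot_lift.
Proof.
by move=> u v; rewrite -(quot_piK u) -(quot_piK v) -raddfB !quot_liftE raddfB.
Qed.
Lemma quot_lift_is_monoid_morphism : monoid_morphism quot_lift.
Proof.
split=> [|u v]; first by rewrite -(rmorph1 quot_pi) quot_liftE rmorph1.
by rewrite -(quot_piK u) -(quot_piK v) -rmorphM !quot_liftE rmorphM.
Qed.
Lemma quot_lift_is_scalable : scalable quot_lift.
Proof. by move=> k u; rewrite -(quot_piK u) -linearZ !quot_liftE linearZ. Qed.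

End Lift.

End Quotient.

Definition word_comb (K : fieldType) (B : algType K) (g : nat -> B)
  (s : seq (K * seq nat)) : B :=
  \sum_(y <- s) y.1 *: \prod_(r <- y.2) g r.

Section WordComb.
Variables (K : fieldType) (B : algType K) (g : nat -> B).

Lemma lrmorph_word_comb (C : algType K) (f : {lrmorphism B -> C}) s :
  f (word_comb g s) = word_comb (f \o g) s.
Proof.
rewrite /word_comb raddf_sum /=; apply: eq_bigr => y _.
by rewrite linearZ /= rmorph_prod.
Qed.

Lemma word_comb_comm s1 s2 : (forall r s, GRing.comm (g r) (g s)) ->
  GRing.comm (word_comb g s1) (word_comb g s2).
Proof.
move=> g_comm; apply: commr_sum => y2 _; apply/commr_sym/commr_sum => y1 _.
rewrite /GRing.comm -!scalerAl -!scalerAr !scalerA mulrC; congr (_ *: _).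
by apply: commr_prod => i _; apply/commr_sym/commr_prod.
Qed.

End WordComb.

Section OSymRelMorph.
Variables (K : fieldType) (B C : algType K) (f : {rmorphism B -> C}).
Variable g : nat -> B.

Lemma OSym_rel_rmorph : OSym_rel g -> OSym_rel (f \o g).
Proof.
move=> [g0 gE]; split=> [|r s s_gt0] /=; first by rewrite g0 rmorph1.
have := gE r s s_gt0; case: ifP => _ E; first by rewrite -!rmorphM E.
by rewrite -!rmorphM -(rmorph_sign f) -!rmorphM -!rmorphD E.
Qed.

Lemma OSym_rel_inj : injective f -> OSym_rel (f \o g) -> OSym_rel g.
Proof.
move=> f_inj [g0 gE]; split=> [|r s s_gt0]; first by apply: f_inj; rewrite rmorph1.
have := gE r s s_gt0; case: ifP => _ /= E; apply: f_inj; first by rewrite !rmorphM E.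
by rewrite !(rmorphD, rmorphM) (rmorph_sign f) E.
Qed.

End OSymRelMorph.

Section OSymUniversal.
Variables (K : fieldType) (A : algType K) (h : nat -> A).
Hypothesis HA : is_OSym h.

Lemma OSym_lrmorph_eq (B : algType K) (f f' : {lrmorphism A -> B}) :
  (forall r, f (h r) = f' (h r)) -> f =1 f'.
Proof.
move=> ff'; have [f0 [_ f0_uniq]] := HA.2 _ _ (OSym_rel_rmorph f HA.1).
by move=> x; rewrite (f0_uniq f) // (f0_uniq f') // => r; rewrite -ff'.
Qed.

Definition word_span : {pred A} := fun x => `[< exists s, x = word_comb h s >].

Lemma word_span_subalg_closed : GRing.subalg_closed word_span.
Proof.
split.
- apply/asboolP; exists [:: (1, [::])].
  by rewrite /word_comb big_seq1 big_nil scale1r.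
- move=> k _ _ /asboolP[s1 ->] /asboolP[s2 ->]; apply/asboolP.
  exists ([seq (k * y.1, y.2) | y <- s1] ++ s2).
  rewrite /word_comb big_cat big_map scaler_sumr; congr (_ + _).
  by apply: eq_bigr => y _; rewrite scalerA.
- move=> _ _ /asboolP[s1 ->] /asboolP[s2 ->]; apply/asboolP.
  exists [seq (x.1 * y.1, x.2 ++ y.2) | x <- s1, y <- s2].
  rewrite /word_comb big_allpairs_dep /= mulr_suml; apply: eq_bigr => x _.
  rewrite mulr_sumr; apply: eq_bigr => y _.
  by rewrite big_cat /= -scalerAl -scalerAr scalerA.
Qed.

HB.instance Definition _ :=
  GRing.isSubalgClosed.Build K A word_span word_span_subalg_closed.

Record word_subalg := WordSubalg { word_val :> A; word_valP : word_val \in word_span }.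
HB.instance Definition _ := [isSub for word_val].
HB.instance Definition _ := [Choice of word_subalg by <:].
HB.instance Definition _ := [SubChoice_isSubAlgebra of word_subalg by <:].

Definition word_incl : word_subalg -> A := val.
HB.instance Definition _ := GRing.RMorphism.on word_incl.
HB.instance Definition _ := GRing.Linear.on word_incl.

Lemma gen_in_word_span r : h r \in word_span.
Proof.
apply/asboolP; exists [:: (1, [:: r])].
by rewrite /word_comb !big_seq1 scale1r.
Qed.

(* The universal property, applied to the generators seen in the subalgebra
   of word combinations, gives a section of its inclusion. *)
Lemma OSym_word_span x : exists s, x = word_comb h s.
Proof.
pose g r := WordSubalg (gen_in_word_span r).
have g_rel : OSym_rel g by apply: (OSym_rel_inj (f := word_incl) val_inj); exact: HA.1.
have [sec [secE _]] := HA.2 _ _ g_rel.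
have sec_id : word_incl \o sec =1 idfun.
  by apply: (OSym_lrmorph_eq (f' := idfun)) => r /=; rewrite secE.
by have := word_valP (sec x); rewrite -[word_val _]/((word_incl \o sec) x) sec_id => /asboolP.
Qed.

End OSymUniversal.

Section OSymRelations.
Variables (K : fieldType) (B : algType K) (g : nat -> B).
Hypothesis g_rel : OSym_rel g.

Lemma OSym_rel_same_parity r s :
  (0 < s)%N -> odd r = odd s -> g r * g s = g s * g r.
Proof. by move=> s_gt0 rs; have := g_rel.2 r s s_gt0; rewrite rs eqxx. Qed.

Lemma OSym_rel_even_g1 r :
  ~~ odd r -> g r * g 1 + g 1 * g r = g r.+1 + g r.+1.
Proof.
move=> /negPf r_even; have := g_rel.2 r 1 isT; rewrite r_even /= -signr_odd r_even.
by rewrite !mul1r g_rel.1 mulr1 mul1r.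
Qed.

Lemma OSym_rel_odd_even r s : odd r -> ~~ odd s -> (0 < s)%N ->
  g r * g s - g s * g r = g s.-1 * g r.+1 - g r.+1 * g s.-1.
Proof.
move=> r_odd /negPf s_even s_gt0; have := g_rel.2 r s s_gt0.
by rewrite r_odd s_even /= -signr_odd r_odd !mulN1r => ->; rewrite addrC.
Qed.

Hypothesis two_neq0 : (2%:R : K) != 0.
Hypothesis g1_comm_g2 : g 1 * g 2 = g 2 * g 1.

Lemma OSym_odd_gen_of_comm k :
  g 1 * g (2 * k) = g (2 * k) * g 1 -> g (2 * k).+1 = g (2 * k) * g 1.
Proof.
move=> comm_k; have := OSym_rel_even_g1 (r := 2 * k); rewrite oddM /= -comm_k.
move=> /(_ isT) /(congr1 (fun x => (2%:R : K)^-1 *: x)).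
by rewrite -!mulr2n -!scaler_nat !scalerA mulVf // !scale1r => <-.
Qed.

(* The relation for (r, s) = (1, 2k + 4) transports the commutation of [g 1]
   with [g (2k + 2)] to [g (2k + 4)]. *)
Lemma OSym_comm_g1_even k : g 1 * g (2 * k) = g (2 * k) * g 1.
Proof.
elim: k => [|[|k] IH]; first by rewrite muln0 g_rel.1 mulr1 mul1r.
  exact: g1_comm_g2.
apply/eqP; rewrite -subr_eq0 OSym_rel_odd_even ?oddM //.
have -> : (2 * k.+2).-1 = (2 * k.+1).+1 by rewrite mulnS.
rewrite OSym_odd_gen_of_comm //.
rewrite -mulrA g1_comm_g2 !mulrA OSym_rel_same_parity ?oddM ?muln_gt0 //.
by rewrite subrr.
Qed.

Lemma OSym_odd_gen k : g (2 * k).+1 = g (2 * k) * g 1.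
Proof. exact/OSym_odd_gen_of_comm/OSym_comm_g1_even. Qed.

Lemma OSym_gen_normal r : g r = g (2 * r./2) * g 1 ^+ odd r.
Proof.
rewrite -{1}(odd_double_half r) -mul2n; case: (odd r); last by rewrite mulr1.
by rewrite OSym_odd_gen.
Qed.

Lemma OSym_gen_comm r s : GRing.comm (g r) (g s).
Proof.
have comm_even a b : GRing.comm (g (2 * a)) (g (2 * b)).
  case: b => [|b]; first by rewrite muln0 g_rel.1; apply: commr1.
  by apply: OSym_rel_same_parity; rewrite ?oddM ?muln_gt0.
have comm_g1 a : GRing.comm (g 1) (g (2 * a)) := OSym_comm_g1_even a.
rewrite (OSym_gen_normal r) (OSym_gen_normal s).
apply/commrM; apply/commr_sym/commrM.
- exact: comm_even.
- by apply/commrX/commr_sym; apply: comm_g1.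
- by apply/commr_sym/commrX/commr_sym; apply: comm_g1.
- exact/commrX/commr_sym/commrX.
Qed.

End OSymRelations.

Lemma big_ord_double (R : nmodType) m (f : nat -> R) :
  \sum_(s < 2 * m) f s = \sum_(j < m) (f (2 * j)%N + f (2 * j).+1).
Proof.
elim: m => [|m IH]; first by rewrite muln0 !big_ord0.
by rewrite mulnS !big_ord_recr /= IH addrA.
Qed.

Lemma signr_even (R : pzRingType) j : (-1) ^+ (2 * j) = 1 :> R.
Proof. by rewrite exprM sqrrN !expr1n. Qed.

Section Convolution.
Variable R : pzRingType.

Lemma conv_injl (a a' b : nat -> R) : b 0%N = 1 ->
  (forall m, \sum_(j < m.+1) a j * b (m - j)%N = \sum_(j < m.+1) a' j * b (m - j)%N) ->
  a =1 a'.
Proof.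
move=> b0 ab m; elim/ltn_ind: m => m IH.
have := ab m; rewrite !big_ord_recr /= subnn b0 !mulr1.
rewrite (eq_bigr (fun j : 'I_m => a' j * b (m - j)%N)) => [/addrI // | j _].
by rewrite IH.
Qed.

Lemma conv_injr (a b b' : nat -> R) : a 0%N = 1 ->
  (forall m, \sum_(j < m.+1) a j * b (m - j)%N = \sum_(j < m.+1) a j * b' (m - j)%N) ->
  b =1 b'.
Proof.
move=> a0 ab m; elim/ltn_ind: m => m IH.
have := ab m; rewrite !big_ord_recl /= subn0 a0 !mul1r.
rewrite (eq_bigr (fun j : 'I_m => a (bump 0 j) * b' (m - bump 0 j)%N)) => [/addIr // | j _].
by rewrite IH // /bump /=; have := ltn_ord j; lia.
Qed.

Lemma rmorph_signed_inv (R' : pzRingType) (f : {rmorphism R -> R'}) (x G : nat -> R) n :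
  \sum_(s < n.+1) (-1) ^+ s * (x s * G (n - s)%N) = (n == 0%N)%:R ->
  \sum_(s < n.+1) (-1) ^+ s * (f (x s) * f (G (n - s)%N)) = (n == 0%N)%:R.
Proof.
move/(congr1 f); rewrite rmorph_sum rmorph_nat => <-.
by apply: eq_bigr => s _; rewrite !rmorphM rmorph_sign.
Qed.

End Convolution.

(* Applied to the images of [e] and [h]: once the odd [h]'s are the even ones
   times [o], the same holds for the [e]'s, and the even parts of [e] and [h]
   become inverse to each other as in [Sym]. *)
Section SignedInverse.
Variables (R : comPzRingType) (d : R) (H G x : nat -> R).
Hypotheses (d2 : d * d = 0) (H0 : H 0%N = 1).
Hypothesis G_even : forall k, G (2 * k)%N = H k.
Hypothesis G_odd : forall k, G (2 * k).+1 = H k * d.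
Hypothesis x_inv : forall n,
  \sum_(s < n.+1) (-1) ^+ s * (x s * G (n - s)%N) = (n == 0%N)%:R.

Lemma signed_inverse_odd m : x (2 * m).+1 = x (2 * m)%N * d.
Proof.
elim/ltn_ind: m => m IH.
have term j : (j <= m)%N ->
    (-1) ^+ (2 * j) * (x (2 * j)%N * G ((2 * m).+1 - 2 * j)%N)
  + (-1) ^+ (2 * j).+1 * (x (2 * j).+1 * G ((2 * m).+1 - (2 * j).+1)%N)
  = (x (2 * j)%N * d - x (2 * j).+1) * H (m - j)%N.
  move=> le_jm; rewrite exprS !signr_even mulr1 mul1r mulN1r.
  have -> : ((2 * m).+1 - 2 * j = (2 * (m - j)).+1)%N by lia.
  have -> : ((2 * m).+1 - (2 * j).+1 = 2 * (m - j))%N by lia.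
  rewrite G_odd G_even; ring.
have := x_inv (2 * m).+1; rewrite -[(2 * m).+2]/(2 + 2 * m)%N -mulnS.
rewrite (big_ord_double _ (fun s => (-1) ^+ s * (x s * G ((2 * m).+1 - s)%N))).
rewrite big_ord_recr /= big1 => [|j _]; last first.
  by have lt_jm := ltn_ord j; rewrite term ?IH ?subrr ?mul0r // ltnW.
by rewrite add0r term // subnn H0 mulr1 => /eqP; rewrite subr_eq0 => /eqP <-.
Qed.

Lemma signed_inverse_even m :
  \sum_(j < m.+1) x (2 * j)%N * H (m - j)%N = (m == 0%N)%:R.
Proof.
have -> : (m == 0%N) = (2 * m == 0)%N by rewrite muln_eq0.
rewrite -(x_inv (2 * m)) [LHS]big_ord_recr [RHS]big_ord_recr /=.
rewrite (big_ord_double _ (fun s => (-1) ^+ s * (x s * G (2 * m - s)%N))).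
rewrite signr_even mul1r !subnn -[G 0%N]/(G (2 * 0)%N) G_even; congr (_ + _).
apply: eq_bigr => j _; have lt_jm := ltn_ord j.
rewrite exprS !signr_even mulr1 mulN1r signed_inverse_odd.
have -> : (2 * m - 2 * j = 2 * (m - j))%N by lia.
have -> : (2 * m - (2 * j).+1 = (2 * (m - j).-1).+1)%N by lia.
rewrite G_even G_odd.
have -> : x (2 * j)%N * d * (H (m - j).-1 * d) = 0.
  by rewrite mulrACA d2 mulr0.
by rewrite mul1r subr0.
Qed.

End SignedInverse.

Section SymDegree.
Variables (K : fieldType) (S : comAlgType K) (e : nat -> S).

Lemma Sym_deg0 d : Sym_deg e d 0.
Proof. by exists [::]; rewrite big_nil. Qed.

Lemma Sym_deg1 : Sym_deg e 0 1.
Proof.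
exists [:: (1, [::])]; rewrite big_seq1 big_nil scale1r.
by split=> // y; rewrite inE => /eqP ->.
Qed.

Lemma Sym_deg_gen r : Sym_deg e (4 * r) (e r).
Proof.
exists [:: (1, [:: r])]; rewrite !big_seq1 scale1r.
by split=> // y; rewrite inE => /eqP ->; rewrite /= addn0.
Qed.

Lemma Sym_degD d x y : Sym_deg e d x -> Sym_deg e d y -> Sym_deg e d (x + y).
Proof.
move=> [s1 [d_s1 ->]] [s2 [d_s2 ->]]; exists (s1 ++ s2); rewrite big_cat.
by split=> // z; rewrite mem_cat => /orP[/d_s1 | /d_s2].
Qed.

Lemma Sym_degZ d k x : Sym_deg e d x -> Sym_deg e d (k *: x).
Proof.
move=> [s [d_s ->]]; exists [seq (k * y.1, y.2) | y <- s]; split.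
  by move=> z /mapP[y /d_s d_y ->].
by rewrite big_map scaler_sumr; apply: eq_bigr => y _; rewrite scalerA.
Qed.

Lemma Sym_deg_sign d n x : Sym_deg e d x -> Sym_deg e d ((-1) ^+ n * x).
Proof.
rewrite -signr_odd; case: (odd n); rewrite ?mul1r // mulN1r -scaleN1r.
exact: Sym_degZ.
Qed.

Lemma Sym_degM d1 d2 x y :
  Sym_deg e d1 x -> Sym_deg e d2 y -> Sym_deg e (d1 + d2) (x * y).
Proof.
move=> [s1 [d_s1 ->]] [s2 [d_s2 ->]].
exists [seq (a.1 * b.1, a.2 ++ b.2) | a <- s1, b <- s2]; split.
  move=> _ /allpairsP[[a b] [/= /d_s1 d_a /d_s2 d_b ->]].
  by rewrite /= sumn_cat mulnDr d_a d_b.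
rewrite big_allpairs_dep /= mulr_suml; apply: eq_bigr => a _.
rewrite mulr_sumr; apply: eq_bigr => b _.
by rewrite big_cat /= -scalerAl -scalerAr scalerA.
Qed.

Lemma Sym_deg_sum (I : eqType) d (r : seq I) (P : pred I) (F : I -> S) :
  (forall i, i \in r -> P i -> Sym_deg e d (F i)) ->
  Sym_deg e d (\sum_(i <- r | P i) F i).
Proof.
move=> d_F; rewrite big_seq_cond.
apply: (big_ind (Sym_deg e d)) => [|x y|i /andP[]]; first exact: Sym_deg0.
  exact: Sym_degD.
exact: d_F.
Qed.

Lemma Sym_deg_eq d d' x : d = d' -> Sym_deg e d x -> Sym_deg e d' x.
Proof. by move=> ->. Qed.

Variable hS : nat -> S.
Hypothesis e0 : e 0%N = 1.
Hypothesis hS_inv : forall r : nat,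
  \sum_(s < r.+1) (-1) ^+ s * (e s * hS (r - s)%N) = (r == 0%N)%:R.

Lemma hS0 : hS 0%N = 1.
Proof. by have := hS_inv 0; rewrite big_ord1 mul1r e0 mul1r. Qed.

Lemma Sym_deg_hS k : Sym_deg e (4 * k) (hS k).
Proof.
elim/ltn_ind: k => -[_ | k IH]; first by rewrite hS0; apply: Sym_deg1.
have := hS_inv k.+1; rewrite big_ord_recl mul1r e0 mul1r subn0 => /eqP.
rewrite addr_eq0 => /eqP ->; rewrite -scaleN1r; apply/Sym_degZ/Sym_deg_sum => i _ _.
apply/Sym_deg_sign/(Sym_deg_eq _ (Sym_degM (Sym_deg_gen _) (IH (k - i)%N _))).
  by have := ltn_ord i; rewrite lift0; lia.
by rewrite ltnS leq_subr.
Qed.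

Lemma Sym_deg_prod_hS (w : seq nat) :
  Sym_deg e (4 * sumn [seq r./2 | r <- w]) (\prod_(r <- w) hS r./2).
Proof.
elim: w => [|r w IH]; first by rewrite big_nil; apply: Sym_deg1.
by rewrite big_cons /= mulnDr; apply: Sym_degM => //; apply: Sym_deg_hS.
Qed.

End SymDegree.

Section SymUniversal.
Variables (K : fieldType) (S : comAlgType K) (eS : nat -> S).
Hypothesis HS : is_Sym eS.

Lemma Sym_lrmorph_eq (B : comAlgType K) (f f' : {lrmorphism S -> B}) :
  (forall r, f (eS r) = f' (eS r)) -> f =1 f'.
Proof.
move=> ff'; have f_e0 : f (eS 0%N) = 1 by rewrite HS.1 rmorph1.
have [f0 [_ f0_uniq]] := HS.2 _ (f \o eS) f_e0.
by move=> x; rewrite (f0_uniq f) // (f0_uniq f') // => r; rewrite -ff'.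
Qed.

Variables (T : comAlgType K) (iota : {lrmorphism S -> T}) (c : T).
Hypothesis HT : is_adjoin_c iota c.

Lemma adjoin_c_lrmorph_eq (B : comAlgType K) (g g' : {lrmorphism T -> B}) :
  (forall x, g (iota x) = g' (iota x)) -> g c = g' c -> g =1 g'.
Proof.
move=> gg' gc; have gc2 : g c * g c = 0 by rewrite -rmorphM HT.1 rmorph0.
have [g0 [_ g0_uniq]] := HT.2 _ (g \o iota) _ gc2.
by move=> x; rewrite (g0_uniq g) // (g0_uniq g') // => y; rewrite -gg'.
Qed.

End SymUniversal.

Lemma sumn_half (w : seq nat) :
  sumn w = (2 * sumn [seq r./2 | r <- w] + count odd w)%N.
Proof. by elim: w => //= r w ->; rewrite -{1}(odd_double_half r) -mul2n; lia. Qed.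

Section Main.
Variables (K : fieldType) (A : algType K) (h e : nat -> A).
Hypotheses (two_neq0 : (2%:R : K) != 0) (HA : is_OSym h).
Hypothesis e_inv : forall r : nat,
  \sum_(s < r.+1) (-1) ^+ s * (e s * h (r - s)%N) = (r == 0%N)%:R.
Variables (S : comAlgType K) (eS hS : nat -> S).
Hypothesis HS : is_Sym eS.
Hypothesis hS_inv : forall r : nat,
  \sum_(s < r.+1) (-1) ^+ s * (eS s * hS (r - s)%N) = (r == 0%N)%:R.
Variables (T : comAlgType K) (iota : {lrmorphism S -> T}) (c : T).
Hypothesis HT : is_adjoin_c iota c.

Lemma e0E : e 0%N = 1.
Proof. by have := e_inv 0; rewrite big_ord1 mul1r HA.1.1 mulr1. Qed.

Lemma e1E : e 1%N = h 1%N.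
Proof.
have := e_inv 1; rewrite !big_ord_recr big_ord0 /= add0r mul1r e0E HA.1.1 mul1r mulr1.
by rewrite mulN1r => /eqP; rewrite subr_eq0 => /eqP.
Qed.

Lemma e2E : e 2 = h 1%N * h 1%N - h 2.
Proof.
have := e_inv 2; rewrite !big_ord_recr big_ord0 /= add0r mul1r e0E HA.1.1 mul1r mulr1.
rewrite mulN1r e1E sqrrN expr1n mul1r => /eqP; rewrite addrC addr_eq0 => /eqP ->.
by rewrite opprB.
Qed.

Definition hT r := iota (hS r./2) * c ^+ odd r.

(* As [T] is commutative, the relations reduce to [hT r * hT s = hT r.+1 * hT s.-1]
   for even [r] and odd [s], where both sides are [iota (hS r./2 * hS s./2) * c]. *)
Lemma hT_rel : OSym_rel hT.
Proof.
have hT0 : hT 0%N = 1 by rewrite /hT /= (hS0 HS.1 hS_inv) rmorph1 mulr1.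
split=> // r s s_gt0; case: ifP => [_ | rs]; first exact: mulrC.
rewrite ![hT s * _]mulrC ![hT s.-1 * _]mulrC -signr_odd.
have s_par : odd s = ~~ odd r by case: (odd r) (odd s) rs => [] [].
case r_odd: (odd r) s_par => s_par /=.
  by rewrite expr1 !mulN1r subrr addNr.
rewrite !mul1r; suff -> : hT r * hT s = hT r.+1 * hT s.-1 by [].
clear rs; case: s s_gt0 s_par => // s _ /= s_even.
rewrite /hT /= r_odd (negbTE s_even) !uphalf_half r_odd (negbTE s_even) /=.
by rewrite expr0 expr1 !mulr1 mulrAC mulrA.
Qed.

Lemma hT_even k : hT (2 * k)%N = iota (hS k).
Proof. by rewrite /hT mul2n doubleK odd_double mulr1. Qed.

Lemma hT_odd k : hT (2 * k).+1 = iota (hS k) * c.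
Proof. by rewrite /hT -uphalfE uphalf_half /= mul2n odd_double doubleK expr1. Qed.

Lemma lrmorph_hT_h1 (f : {lrmorphism A -> T}) :
  (forall r, f (h r) = hT r) -> f (h 1%N) = c.
Proof. by move=> ->; rewrite /hT /= (hS0 HS.1 hS_inv) rmorph1 mul1r expr1. Qed.

Definition J_gens (y : A) : Prop :=
  y = e 1%N * e 1%N \/ y = e 1%N * e 2 - e 2 * e 1%N.

Lemma OSym_par_h1 : OSym_par h true (h 1%N).
Proof.
exists [:: (1, [:: 1%N])]; rewrite !big_seq1 scale1r.
by split=> // y; rewrite inE => /eqP ->.
Qed.

Lemma OSym_par_e2 : OSym_par h false (e 2).
Proof.
exists [:: (1, [:: 1%N; 1%N]); (-1, [:: 2%N])]; split.
  by move=> y; rewrite !inE => /orP[] /eqP ->.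
by rewrite big_cons big_seq1 /= big_cons !big_seq1 scale1r scaleN1r e2E.
Qed.

(* [o^2] is half of the supercommutator [o o + o o]. *)
Lemma J_gens_scomm y : J_gens y -> ideal_gen (scomm h) y.
Proof.
case=> ->; last first.
  apply: mem_ideal_gen; exists (e 1%N), (e 2), true, false.
  by rewrite e1E mul1r; do !split; [exact: OSym_par_h1 | exact: OSym_par_e2].
have o_scomm : scomm h (h 1%N * h 1%N - (-1) ^+ (true && true) * (h 1%N * h 1%N)).
  by exists (h 1%N), (h 1%N), true, true; do !split; exact: OSym_par_h1.
have := ideal_genZ (2%:R^-1 : K) (mem_ideal_gen o_scomm).
by rewrite expr1 mulN1r opprK -mulr2n -scaler_nat scalerA mulVf // scale1r e1E.
Qed.

Lemma lrmorph_hT_J_gens (f : {lrmorphism A -> T}) :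
  (forall r, f (h r) = hT r) -> forall y, J_gens y -> f y = 0.
Proof.
move=> f_h _ [->|->]; first by rewrite rmorphM /= e1E lrmorph_hT_h1 // HT.1.
by rewrite rmorphB !rmorphM mulrC subrr.
Qed.

Lemma J_proper : ~ ideal_gen J_gens 1.
Proof.
have [phi [phi_h _]] := HA.2 _ _ hT_rel.
by move/(rmorph_ideal_gen_eq0 (lrmorph_hT_J_gens phi_h))/eqP; rewrite rmorph1 oner_eq0.
Qed.

Local Notation Q := (quot_alg J_proper).
Local Notation pi := (quot_pi J_proper).

Lemma pi_h_rel : OSym_rel (pi \o h).
Proof. exact: OSym_rel_rmorph HA.1. Qed.

Lemma pi_h1_comm_h2 : pi (h 1%N) * pi (h 2) = pi (h 2) * pi (h 1%N).
Proof.
apply/eqP; rewrite -subr_eq0 -!rmorphM -rmorphB; apply/eqP/quot_pi_eq0.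
rewrite -opprB; apply/ideal_genN/mem_ideal_gen; right.
by rewrite e1E e2E mulrBr mulrBl mulrA opprB [RHS]addrC addrA subrK.
Qed.

Lemma quot_comm (x y : Q) : x * y = y * x.
Proof.
rewrite -(quot_piK x) -(quot_piK y).
have [s1 ->] := OSym_word_span HA (repr x); have [s2 ->] := OSym_word_span HA (repr y).
rewrite !lrmorph_word_comb; apply: word_comb_comm.
exact: (OSym_gen_comm pi_h_rel two_neq0 pi_h1_comm_h2).
Qed.

(* Indexed by [two_neq0] so that the commutative structure, which depends on
   it, can be declared on this type. *)
Definition comm_quot of (2%:R : K) != 0 : Type := Q.
Local Notation R := (comm_quot two_neq0).
HB.instance Definition _ := GRing.Algebra.on R.
HB.instance Definition _ := GRing.PzRing_hasCommutativeMul.Build R quot_comm.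
HB.instance Definition _ := GRing.Lalgebra_isComAlgebra.Build K R.

Definition piR : A -> R := pi.
HB.instance Definition _ := GRing.LRMorphism.copy piR pi.

Lemma piR_eq0 x : piR x = 0 <-> ideal_gen J_gens x.
Proof. exact: quot_pi_eq0. Qed.

Local Notation o := (piR (h 1%N)).

Lemma o_sq : o * o = 0.
Proof. by rewrite -rmorphM -e1E; apply/piR_eq0/mem_ideal_gen; left. Qed.

Lemma piR_h_odd k : piR (h (2 * k).+1) = piR (h (2 * k)%N) * o.
Proof. exact: (OSym_odd_gen pi_h_rel two_neq0 pi_h1_comm_h2). Qed.

Lemma piR_h_normal r : piR (h r) = piR (h (2 * r./2)%N) * o ^+ odd r.
Proof. exact: (OSym_gen_normal pi_h_rel two_neq0 pi_h1_comm_h2). Qed.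

Lemma piR_e_odd m : piR (e (2 * m).+1) = piR (e (2 * m)%N) * o.
Proof.
apply: (signed_inverse_odd (H := fun k => piR (h (2 * k)%N)) (G := piR \o h)
  (x := piR \o e)).
- by rewrite muln0 HA.1.1 rmorph1.
- by [].
- exact: piR_h_odd.
- by move=> n; apply: rmorph_signed_inv.
Qed.

Lemma piR_e_even_inv m :
  \sum_(j < m.+1) piR (e (2 * j)%N) * piR (h (2 * (m - j))%N) = (m == 0%N)%:R.
Proof.
apply: (signed_inverse_even (H := fun k => piR (h (2 * k)%N)) (G := piR \o h)
  (x := piR \o e)).
- exact: o_sq.
- by rewrite muln0 HA.1.1 rmorph1.
- by [].
- exact: piR_h_odd.
- by move=> n; apply: rmorph_signed_inv.
Qed.

Lemma piR_word w :
  piR (\prod_(r <- w) h r) = \prod_(r <- w) piR (h (2 * r./2)%N) * o ^+ count odd w.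
Proof.
elim: w => [|r w IH]; first by rewrite !big_nil rmorph1 mulr1.
by rewrite !big_cons rmorphM /= IH exprD piR_h_normal mulrACA.
Qed.

Lemma piR_odd a : OSym_par h true a -> exists y, piR a = y * o.
Proof.
move=> [s [s_odd ->]].
exists (\sum_(y <- s)
  y.1 *: (\prod_(r <- y.2) piR (h (2 * r./2)%N) * o ^+ (count odd y.2).-1)).
rewrite raddf_sum mulr_suml; apply: eq_big_seq => y /s_odd.
rewrite sumn_half oddD oddM /= => /odd_gt0 count_gt0.
by rewrite linearZ /= piR_word -scalerAl -mulrA -exprSr prednK.
Qed.

Lemma scomm_J x : scomm h x -> ideal_gen J_gens x.
Proof.
move=> [a [b [pa [pb [a_par [b_par ->]]]]]]; apply/piR_eq0.
rewrite rmorphB !rmorphM rmorph_sign /=.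
case: pa pb a_par b_par => [] [] //= a_par b_par;
  rewrite ?mul1r ?[piR b * _]mulrC ?subrr //.
have [y ->] := piR_odd a_par; have [z ->] := piR_odd b_par.
by rewrite mulrACA o_sq mulr0 mulr0 subrr.
Qed.

Lemma scomm_idealE x : ideal_gen (scomm h) x <-> ideal_gen J_gens x.
Proof. by split; apply: ideal_gen_min; [apply: scomm_J | apply: J_gens_scomm]. Qed.

Lemma scomm_e_odd r : ideal_gen (scomm h) (e (2 * r).+1 - e (2 * r)%N * e 1%N).
Proof. by apply/scomm_idealE/piR_eq0; rewrite rmorphB rmorphM /= e1E piR_e_odd subrr. Qed.

Lemma scomm_h_odd r : ideal_gen (scomm h) (h (2 * r).+1 - h (2 * r)%N * e 1%N).
Proof. by apply/scomm_idealE/piR_eq0; rewrite rmorphB rmorphM /= e1E piR_h_odd subrr. Qed.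

Section Phi.
Variable phi : {lrmorphism A -> T}.
Hypothesis phi_h : forall r, phi (h r) = hT r.

Lemma phi_e1 : phi (e 1%N) = c.
Proof. by rewrite e1E lrmorph_hT_h1. Qed.

Lemma phi_e_even j : phi (e (2 * j)%N) = (-1) ^+ j * iota (eS j).
Proof.
move: j; apply: (conv_injl (a := fun j => phi (e (2 * j)%N)) (b := iota \o hS)).
  by rewrite /= (hS0 HS.1 hS_inv) rmorph1.
move=> m /=; under [RHS]eq_bigr do rewrite -mulrA.
rewrite (rmorph_signed_inv iota (hS_inv m)).
apply: (signed_inverse_even (H := iota \o hS) (G := hT) (x := phi \o e)).
- exact: HT.1.
- by rewrite /= (hS0 HS.1 hS_inv) rmorph1.
- exact: hT_even.
- exact: hT_odd.
- move=> n; rewrite -(rmorph_signed_inv phi (e_inv n)).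
  by apply: eq_bigr => s _; rewrite /= phi_h.
Qed.

Lemma phi_sign_e_even r : phi ((-1) ^+ r * e (2 * r)%N) = iota (eS r).
Proof. by rewrite rmorphM rmorph_sign /= phi_e_even signrMK. Qed.

Lemma phi_h_even r : phi (h (2 * r)%N) = iota (hS r).
Proof. by rewrite phi_h hT_even. Qed.

Definition psi : R -> T := quot_lift (P_proper := J_proper) phi.
HB.instance Definition _ :=
  GRing.isZmodMorphism.Build R T psi 
    (@quot_lift_is_zmod_morphism _ _ _ J_proper _ _ (lrmorph_hT_J_gens phi_h)).
HB.instance Definition _ :=
  GRing.isMonoidMorphism.Build R T psi 
    (@quot_lift_is_monoid_morphism _ _ _ J_proper _ _ (lrmorph_hT_J_gens phi_h)).
HB.instance Definition _ :=
  GRing.isScalable.Build K R T *:%R psi 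
    (@quot_lift_is_scalable _ _ _ J_proper _ _ (lrmorph_hT_J_gens phi_h)).

Lemma psi_piR x : psi (piR x) = phi x.
Proof. exact: (quot_liftE J_proper (lrmorph_hT_J_gens phi_h)). Qed.

Section Inverse.
Variable fS : {lrmorphism S -> R}.
Hypothesis fS_eS : forall r, fS (eS r) = piR ((-1) ^+ r * e (2 * r)%N).
Variable gR : {lrmorphism T -> R}.
Hypotheses (gR_iota : forall x, gR (iota x) = fS x) (gR_c : gR c = o).

Lemma fS_hS m : fS (hS m) = piR (h (2 * m)%N).
Proof.
move: m; apply: (conv_injr (a := fun j => piR (e (2 * j)%N))).
  by rewrite muln0 e0E rmorph1.
move=> m; rewrite piR_e_even_inv -(rmorph_signed_inv fS (hS_inv m)).
apply: eq_bigr => j _; rewrite /= fS_eS rmorphM /= rmorph_sign.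
by rewrite mulrA signrMK.
Qed.

Lemma gR_phi x : gR (phi x) = piR x.
Proof.
move: x; apply: (OSym_lrmorph_eq HA (f := gR \o phi) (f' := piR)) => r /=.
rewrite phi_h /hT rmorphM rmorphXn /= gR_iota gR_c fS_hS.
by rewrite [RHS]piR_h_normal.
Qed.

Lemma psi_gR t : psi (gR t) = t.
Proof.
have psi_fS : psi \o fS =1 iota.
  apply: (Sym_lrmorph_eq HS (f := psi \o fS) (f' := iota)) => r /=.
  by rewrite fS_eS psi_piR phi_sign_e_even.
move: t; apply: (adjoin_c_lrmorph_eq HT (g := psi \o gR) (g' := idfun)) => [x|] /=.
  by rewrite gR_iota; apply: psi_fS.
by rewrite gR_c psi_piR lrmorph_hT_h1.
Qed.

End Inverse.

Lemma comm_quot_inverse : exists gR : {lrmorphism T -> R},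
  (forall x, gR (phi x) = piR x) /\ (forall t, psi (gR t) = t).
Proof.
have piR_e0 : piR ((-1) ^+ 0 * e (2 * 0)%N) = 1 by rewrite mul1r e0E rmorph1.
have [fS [fS_eS _]] := HS.2 _ (fun r => piR ((-1) ^+ r * e (2 * r)%N)) piR_e0.
have [gR [[gR_iota gR_c] _]] := HT.2 _ fS o o_sq.
by exists gR; split; [apply: gR_phi gR_iota gR_c | apply: psi_gR gR_iota gR_c].
Qed.

Lemma phi_eq0 x : phi x = 0 <-> ideal_gen (scomm h) x.
Proof.
rewrite scomm_idealE; split; last exact/rmorph_ideal_gen_eq0/lrmorph_hT_J_gens.
have [gR [gR_phi _]] := comm_quot_inverse.
by move=> phi_x; apply/piR_eq0; rewrite -gR_phi phi_x rmorph0.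
Qed.

Lemma phi_surj t : exists a, phi a = t.
Proof.
have [gR [_ psi_gR]] := comm_quot_inverse.
by exists (repr (gR t)); rewrite -psi_piR /piR quot_piK psi_gR.
Qed.

Lemma phi_word w :
  phi (\prod_(r <- w) h r) = iota (\prod_(r <- w) hS r./2) * c ^+ count odd w.
Proof.
elim: w => [|r w IH]; first by rewrite !big_nil !rmorph1 mulr1.
by rewrite !big_cons !rmorphM /= IH phi_h /hT exprD mulrACA.
Qed.

Definition sym_part k (s : seq (K * seq nat)) : S :=
  \sum_(y <- s | count odd y.2 == k) y.1 *: \prod_(r <- y.2) hS r./2.

Lemma phi_word_comb s :
  phi (word_comb h s) = iota (sym_part 0 s) + iota (sym_part 1 s) * c.
Proof.
elim: s => [|y s IH]; first by rewrite /word_comb /sym_part !big_nil !rmorph0 mul0r addr0.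
rewrite /word_comb /sym_part !big_cons rmorphD /= linearZ /= -/(word_comb h s).
rewrite IH phi_word.
case: (count odd y.2) => [|[|n]] /=.
- by rewrite mulr1 rmorphD /= linearZ addrA.
- by rewrite expr1 rmorphD /= linearZ /= mulrDl -scalerAl addrCA.
- by rewrite exprS exprS [c * (c * _)]mulrA HT.1 mul0r mulr0 scaler0 add0r.
Qed.

Lemma phi_SymC_deg d a : OSym_deg h d a -> SymC_deg eS iota c d (phi a).
Proof.
move=> [s [s_deg ->]]; exists (sym_part 0 s), (sym_part 1 s).
have part_deg k : Sym_deg eS (d - 2 * k) (sym_part k s).
  apply: Sym_deg_sum => y /s_deg; rewrite sumn_half => d_y /eqP count_y.
  apply/Sym_degZ/(Sym_deg_eq _ (Sym_deg_prod_hS HS.1 hS_inv y.2)).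
  by rewrite -d_y -count_y mulnDr mulnA addnK.
split; first by have := part_deg 0%N; rewrite muln0 subn0.
split; first by move=> _; apply: (part_deg 1%N).
split; last exact: phi_word_comb.
move=> d_lt2; rewrite /sym_part big1_seq // => y /andP[/eqP count_y /s_deg].
by rewrite sumn_half count_y => d_y; rewrite -d_y mulnDr ltnNge leq_addl in d_lt2.
Qed.

Lemma phi_SymC_par p a : OSym_par h p a -> SymC_par iota c p (phi a).
Proof.
move=> [s [s_par ->]]; rewrite phi_word_comb.
have part_eq0 k : odd k != p -> sym_part k s = 0.
  move=> k_par; rewrite /sym_part big1_seq // => y /andP[/eqP count_y /s_par].
  by rewrite sumn_half oddD oddM count_y /= => odd_k; rewrite odd_k eqxx in k_par.
case: p {s_par} part_eq0 => part_eq0.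
- by exists (sym_part 1 s); rewrite part_eq0 // rmorph0 add0r.
- by exists (sym_part 0 s); rewrite (part_eq0 1%N) // rmorph0 mul0r addr0.
Qed.

End Phi.
End Main.

Unset Implicit Arguments.

Theorem mainTheorem6
  (K : closedFieldType) (char_not2 : (2%:R : K) != 0)
  (A : algType K) (h : nat -> A) (HA : is_OSym h)
  (e : nat -> A)
  (He : forall r : nat,
     \sum_(s < r.+1) (-1) ^+ s * (e s * h (r - s)%N) = (r == 0%N)%:R)
  (S : comAlgType K) (eS : nat -> S) (HS : is_Sym eS)
  (hS : nat -> S)
  (HhS : forall r : nat,
     \sum_(s < r.+1) (-1) ^+ s * (eS s * hS (r - s)%N) = (r == 0%N)%:R)
  (T : comAlgType K) (iota : {lrmorphism S -> T}) (c : T)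
  (HT : is_adjoin_c iota c) :
  (* the largest supercommutative quotient is OSym / <o^2, [o, e_2]> *)
  (forall x : A, ideal_gen (scomm h) x <->
     ideal_gen (fun y => y = e 1%N * e 1%N \/ y = e 1%N * e 2%N - e 2%N * e 1%N) x) /\
  (* relations in the quotient R *)
  (forall r : nat,
     ideal_gen (scomm h) (e (2 * r).+1 - e (2 * r)%N * e 1%N) /\
     ideal_gen (scomm h) (h (2 * r).+1 - h (2 * r)%N * e 1%N)) /\
  (* R ~= Sym[c] as graded superalgebras, via phi : OSym ->> Sym[c]
     with kernel the supercommutator ideal *)
  (exists phi : {lrmorphism A -> T},
     phi (e 1%N) = c /\
     (forall r : nat, phi ((-1) ^+ r * e (2 * r)%N) = iota (eS r)) /\
     (forall r : nat, phi (h (2 * r)%N) = iota (hS r)) /\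
     (forall t : T, exists a : A, phi a = t) /\
     (forall a : A, phi a = 0 <-> ideal_gen (scomm h) a) /\
     (forall (d : nat) (a : A), OSym_deg h d a -> SymC_deg eS iota c d (phi a)) /\
     (forall (p : bool) (a : A), OSym_par h p a -> SymC_par iota c p (phi a))).
Proof.
have [phi [phi_h _]] := HA.2 _ _ (hT_rel HS HhS iota c).
split; first exact: (scomm_idealE char_not2 HA He HS HhS HT).
split=> [r|]; first split.
- exact: (scomm_e_odd char_not2 HA He HS HhS HT).
- exact: (scomm_h_odd char_not2 HA He HS HhS HT).
exists phi; split; first exact: (phi_e1 HA He HS HhS phi_h).
split; first exact: (phi_sign_e_even He HS HhS HT phi_h).
split; first exact: (phi_h_even phi_h).
split; first exact: (phi_surj char_not2 HA He HS HhS HT phi_h).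
split; first exact: (phi_eq0 char_not2 HA He HS HhS HT phi_h).
split; first exact: (phi_SymC_deg HS HhS HT phi_h).
exact: (phi_SymC_par HT phi_h).
Qed.
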